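(* (1) The associative algebra $(\mathcal{H}_{\mathbb{T}},.)$ is freely generated by the set of indecomposable topologies. (2) The associative algebra $(\mathcal{H}_{\mathbb{T}},\downarrow)$ is freely generated by the set of $\downarrow$-indecomposable topologies. (3) The 2-associative algebra $(\mathcal{H}_{\mathbb{T}},.,\downarrow)$ is freely generated by the set of bi-indecomposable topologies, i.e. for every 2-associative algebra $(A,.,\downarrow)$ and every choice of elements $a_{\mathcal{T}}\in A$ indexed by the bi-indecomposable topologies $\mathcal{T}$, there is a unique linear map $\phi:\mathcal{H}_{\mathbb{T}}\to A$ sending $1$ to the unit of $A$, compatible with both products, and with $\phi(\mathcal{T})=a_{\mathcal{T}}$ for every bi-indecomposable $\mathcal{T}$.
   Context: Let $K$ be a field. For $n\geq0$, $[n]=\{1,\ldots,n\}$, $\mathbb{T}_n$ is the set of topologies on $[n]$, and $\mathcal{H}_{\mathbb{T}}$ is the $K$-vector space with basis $\bigsqcup_{n\ge0}\mathbb{T}_n$; the empty topology on $[0]$ is denoted $1$. For $O\subseteq\mathbb{N}$, $O(+n)=\{k+n\mid k\in O\}$. For $\mathcal{T}\in\mathbb{T}_n$, $\mathcal{T}'\in\mathbb{T}_{n'}$: $\mathcal{T}.\mathcal{T}'$ is the topology on $[n+n']$ with open sets $O\sqcup O'(+n)$ ($O\in\mathcal{T}$, $O'\in\mathcal{T}'$); $\mathcal{T}\downarrow\mathcal{T}'$ is the topology on $[n+n']$ with open sets $O\sqcup[n'](+n)$ ($O\in\mathcal{T}$) and $O'(+n)$ ($O'\in\mathcal{T}'$).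 Both products are extended bilinearly to $\mathcal{H}_{\mathbb{T}}$; they are associative with common unit $1$. A topology $\mathcal{T}\neq 1$ is indecomposable if it cannot be written $\mathcal{T}'.\mathcal{T}''$ with $\mathcal{T}',\mathcal{T}''\neq1$; $\downarrow$-indecomposable if it cannot be written $\mathcal{T}'\downarrow\mathcal{T}''$ with $\mathcal{T}',\mathcal{T}''\neq 1$; bi-indecomposable if it is both. A 2-associative algebra is a vector space with two associative products sharing the same unit; morphisms preserve both products and the unit. *)

From HB Require Import structures.
From mathcomp Require Import all_boot all_order all_algebra.
From mathcomp Require Import finmap.
From mathcomp.multinomials Require Import monalg.
Set Implicit Arguments. Unset Strict Implicit. Unset Printing Implicit Defensive.
Import GRing.Theory.
Local Open Scope ring_scope.

(* On a finite set, a topology is a family of subsets containing the empty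
   set and the whole set, closed under (finite = arbitrary) unions and finite
   intersections. *)
Definition is_topology n (T : {set {set 'I_n}}) : bool :=
  [&& set0 \in T, setT \in T &
      [forall O1 in T, forall O2 in T, (O1 :|: O2 \in T) && (O1 :&: O2 \in T)]].

Definition topo n := {T : {set {set 'I_n}} | is_topology T}.

Lemma indisc_is_topology n : is_topology [set set0; setT : {set 'I_n}].
Proof.
apply/and3P; split; rewrite ?inE ?eqxx ?orbT //.
apply/forallP=> O1; apply/implyP; rewrite !inE => /orP[]/eqP->;
apply/forallP=> O2; apply/implyP; rewrite !inE => /orP[]/eqP->;
by rewrite ?set0U ?setU0 ?setTU ?setUT ?set0I ?setI0 ?setIT ?setTI ?inE ?eqxx ?orbT.
Qed.

(* the indiscrete topology; on [0] it is the unique (empty) topology 1 *)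
Definition indisc n : topo n := exist (fun T => is_topology T) _ (indisc_is_topology n).

(* Raw open-set families of T.T' and T(down)T'.  O(+n) is the image of O
   under rshift n : 'I_m -> 'I_(n+m) (k |-> n+k); O itself is embedded by
   lshift m : 'I_n -> 'I_(n+m). *)
Definition conc_raw n m (T : {set {set 'I_n}}) (T' : {set {set 'I_m}})
  : {set {set 'I_(n + m)}} :=
  [set (@lshift n m @: O) :|: (@rshift n m @: O') | O : {set 'I_n} in T, O' : {set 'I_m} in T'].

Definition down_raw n m (T : {set {set 'I_n}}) (T' : {set {set 'I_m}})
  : {set {set 'I_(n + m)}} :=
  [set (@lshift n m @: O) :|: (@rshift n m @: [set: 'I_m]) | O : {set 'I_n} in T]
  :|: [set (@rshift n m @: O') | O' : {set 'I_m} in T'].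

(* These raw families are always topologies, so [insubd] never uses its
   default; the default only avoids carrying the proof in the definition. *)
Definition tconc n m (T : topo n) (T' : topo m) : topo (n + m) :=
  insubd (indisc (n + m)) (conc_raw (val T) (val T')).
Definition tdown n m (T : topo n) (T' : topo m) : topo (n + m) :=
  insubd (indisc (n + m)) (down_raw (val T) (val T')).

Definition tot := {n : nat & topo n}.

Definition bconc (u v : tot) : tot := Tagged topo (tconc (tagged u) (tagged v)).
Definition bdown (u v : tot) : tot := Tagged topo (tdown (tagged u) (tagged v)).

Definition tunit : tot := Tagged topo (indisc 0).

Definition HT (K : fieldType) := {malg K[tot]}.

Definition hb (K : fieldType) (u : tot) : HT K := << u >>.
Definition hunit (K : fieldType) : HT K := hb K tunit.

Definition hconc (K : fieldType) (x y : HT K) : HT K :=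
  \sum_(u <- msupp x) \sum_(v <- msupp y) << (x@_u * y@_v) *g bconc u v >>.
Definition hdown (K : fieldType) (x y : HT K) : HT K :=
  \sum_(u <- msupp x) \sum_(v <- msupp y) << (x@_u * y@_v) *g bdown u v >>.

Definition indecomposable (u : tot) : Prop :=
  u <> tunit /\ ~ (exists v w, v <> tunit /\ w <> tunit /\ u = bconc v w).
Definition down_indecomposable (u : tot) : Prop :=
  u <> tunit /\ ~ (exists v w, v <> tunit /\ w <> tunit /\ u = bdown v w).
Definition bi_indecomposable (u : tot) : Prop :=
  indecomposable u /\ down_indecomposable u.

Definition two_assoc (K : fieldType) (A : lmodType K)
  (m1 m2 : A -> A -> A) (e : A) : Prop :=
  [/\ (forall x, linear (m1 x)) /\ (forall y, linear (m1^~ y)),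
      (forall x, linear (m2 x)) /\ (forall y, linear (m2^~ y)),
      associative m1 /\ associative m2,
      left_id e m1 /\ right_id e m1 &
      left_id e m2 /\ right_id e m2].

Definition unital_morph (K : fieldType) (A : lmodType K)
  (mH : HT K -> HT K -> HT K) (mA : A -> A -> A) (e : A) (phi : HT K -> A) : Prop :=
  [/\ linear phi, phi (hunit K) = e &
      forall x y, phi (mH x y) = mA (phi x) (phi y)].

Definition on_gens (K : fieldType) (A : Type) (P : tot -> Prop) (a : tot -> A)
  (phi : HT K -> A) : Prop :=
  forall u, P u -> phi (hb K u) = a u.

From HB Require Import structures.
From mathcomp Require Import all_boot all_order all_algebra.
From mathcomp Require Import finmap.
From mathcomp.multinomials Require Import monalg.
From mathcomp Require Import zify.
From Stdlib Require Import ClassicalEpsilon Classical.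
Set Implicit Arguments. Unset Strict Implicit. Unset Printing Implicit Defensive.
Import GRing.Theory.

(* A topology u on [n] is determined by its open predicates on nat, which makes
   topologies on [n], [m] and [n+m] comparable without casts.  A factorisation
   u = v.w with |v| = k exists iff every open set of u splits into its parts
   below and above k, and u = v ↓ w with |v| = k exists iff [k,n) is open and
   every open set either contains [k,n) or misses [0,k).  If u = v.w = v'.w'
   with 0 < |v| < |v'|, the cut at |v| restricts to v', so v' is decomposable:
   hence every decomposable u splits uniquely as (indecomposable).(rest), and
   likewise for ↓; moreover no topology decomposes for both products.  These
   unique first factors let one define, by recursion on n, the value of the
   required morphism on each basis topology; it is multiplicative by
   associativity in A, and its linear extension is the morphism.  Uniqueness
   holds because a multiplicative map is determined by its values on the unit
   and on the generators. *)

Section SplitSets.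
Variables n m : nat.

Definition lpart (Y : {set 'I_(n + m)}) : {set 'I_n} := [set i | @lshift n m i \in Y].
Definition rpart (Y : {set 'I_(n + m)}) : {set 'I_m} := [set j | @rshift n m j \in Y].
Definition glue (O : {set 'I_n}) (O' : {set 'I_m}) : {set 'I_(n + m)} :=
  (@lshift n m @: O) :|: (@rshift n m @: O').

Lemma lshift_in_rshift_imset i (O' : {set 'I_m}) :
  (@lshift n m i \in @rshift n m @: O') = false.
Proof. by apply/imsetP=> -[j _ /eqP]; rewrite eq_lrshift. Qed.

Lemma rshift_in_lshift_imset j (O : {set 'I_n}) :
  (@rshift n m j \in @lshift n m @: O) = false.
Proof. by apply/imsetP=> -[i _ /eqP]; rewrite eq_rlshift. Qed.

Lemma lpart_glue O O' : lpart (glue O O') = O.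
Proof.
apply/setP=> i.
by rewrite !inE lshift_in_rshift_imset orbF (mem_imset _ _ (@lshift_inj _ _)).
Qed.

Lemma rpart_glue O O' : rpart (glue O O') = O'.
Proof.
apply/setP=> j.
by rewrite !inE rshift_in_lshift_imset (mem_imset _ _ (@rshift_inj _ _)).
Qed.

Lemma glue_part Y : glue (lpart Y) (rpart Y) = Y.
Proof.
apply/setP=> k; rewrite !inE; case: (split_ordP k) => j ->.
  by rewrite lshift_in_rshift_imset orbF (mem_imset _ _ (@lshift_inj _ _)) inE.
by rewrite rshift_in_lshift_imset (mem_imset _ _ (@rshift_inj _ _)) inE.
Qed.

Lemma mem_conc_raw T T' Y :
  (Y \in conc_raw T T') = (lpart Y \in T) && (rpart Y \in T').
Proof.
apply/imset2P/andP => [[O O' hO hO' ->]|[hl hr]].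
  by rewrite -/(glue O O') lpart_glue rpart_glue.
by exists (lpart Y) (rpart Y); rewrite // -/(glue _ _) glue_part.
Qed.

Lemma mem_down_raw T T' Y : (Y \in down_raw T T') =
  (lpart Y \in T) && (rpart Y == setT) || (lpart Y == set0) && (rpart Y \in T').
Proof.
have glue0 (O' : {set 'I_m}) : @rshift n m @: O' = glue set0 O' by rewrite /glue imset0 set0U.
rewrite inE; congr orb.
  apply/imsetP/andP => [[O hO ->]|[hl /eqP hr]].
    by rewrite -/(glue O setT) lpart_glue rpart_glue eqxx.
  by exists (lpart Y); rewrite // -hr -/(glue _ _) glue_part.
apply/imsetP/andP => [[O' hO' ->]|[/eqP hl hr]].
  by rewrite glue0 lpart_glue rpart_glue eqxx.
by exists (rpart Y); rewrite // glue0 -hl glue_part.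
Qed.

Lemma lpartU Y1 Y2 : lpart (Y1 :|: Y2) = lpart Y1 :|: lpart Y2.
Proof. by apply/setP=> i; rewrite !inE. Qed.
Lemma lpartI Y1 Y2 : lpart (Y1 :&: Y2) = lpart Y1 :&: lpart Y2.
Proof. by apply/setP=> i; rewrite !inE. Qed.
Lemma rpartU Y1 Y2 : rpart (Y1 :|: Y2) = rpart Y1 :|: rpart Y2.
Proof. by apply/setP=> j; rewrite !inE. Qed.
Lemma rpartI Y1 Y2 : rpart (Y1 :&: Y2) = rpart Y1 :&: rpart Y2.
Proof. by apply/setP=> j; rewrite !inE. Qed.
Lemma lpart0 : lpart set0 = set0. Proof. by apply/setP=> i; rewrite !inE. Qed.
Lemma rpart0 : rpart set0 = set0. Proof. by apply/setP=> j; rewrite !inE. Qed.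
Lemma lpartT : lpart setT = setT. Proof. by apply/setP=> i; rewrite !inE. Qed.
Lemma rpartT : rpart setT = setT. Proof. by apply/setP=> j; rewrite !inE. Qed.

End SplitSets.

Lemma is_topologyP k (T : {set {set 'I_k}}) :
  reflect [/\ set0 \in T, setT \in T, {in T &, forall O1 O2, O1 :|: O2 \in T}
            & {in T &, forall O1 O2, O1 :&: O2 \in T}]
          (is_topology T).
Proof.
apply: (iffP and3P) => [[h0 hT /forall_inP hUI]|[h0 hT hU hI]].
  split=> // O1 O2 hO1 hO2;
  by have /forall_inP/(_ _ hO2)/andP[] := hUI _ hO1.
split=> //; apply/forall_inP=> O1 hO1; apply/forall_inP=> O2 hO2.
by rewrite hU ?hI.
Qed.

Lemma conc_raw_topology n m (T : {set {set 'I_n}}) (T' : {set {set 'I_m}}) :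
  is_topology T -> is_topology T' -> is_topology (conc_raw T T').
Proof.
move=> /is_topologyP[a0 aT aU aI] /is_topologyP[b0 bT bU bI].
apply/is_topologyP; split;
  rewrite ?mem_conc_raw ?lpart0 ?rpart0 ?lpartT ?rpartT ?a0 ?b0 ?aT ?bT //;
move=> O1 O2; rewrite !mem_conc_raw ?lpartU ?rpartU ?lpartI ?rpartI;
by move=> /andP[h1 h2] /andP[h3 h4]; rewrite ?aU ?bU ?aI ?bI.
Qed.

Lemma down_raw_topology n m (T : {set {set 'I_n}}) (T' : {set {set 'I_m}}) :
  is_topology T -> is_topology T' -> is_topology (down_raw T T').
Proof.
move=> /is_topologyP[a0 aT aU aI] /is_topologyP[b0 bT bU bI].
apply/is_topologyP; split;
  rewrite ?mem_down_raw ?lpart0 ?rpart0 ?lpartT ?rpartT ?a0 ?b0 ?aT ?bT ?eqxx ?orbT //;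
move=> O1 O2; rewrite !mem_down_raw ?lpartU ?rpartU ?lpartI ?rpartI;
move=> /orP[/andP[h1 /eqP->]|/andP[/eqP-> h1]] /orP[/andP[h2 /eqP->]|/andP[/eqP-> h2]];
rewrite ?setUT ?setTU ?setU0 ?set0U ?setIT ?setTI ?setI0 ?set0I;
by rewrite ?aU ?aI ?bU ?bI ?h1 ?h2 ?eqxx ?orbT.
Qed.

Lemma val_tconc n m (u : topo n) (v : topo m) :
  val (tconc u v) = conc_raw (val u) (val v).
Proof. by rewrite /tconc insubdK //; apply: conc_raw_topology; apply: valP. Qed.

Lemma val_tdown n m (u : topo n) (v : topo m) :
  val (tdown u v) = down_raw (val u) (val v).
Proof. by rewrite /tdown insubdK //; apply: down_raw_topology; apply: valP. Qed.

Definition openb (u : tot) (X : pred nat) : bool :=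
  [set i : 'I_(tag u) | X i] \in val (tagged u).

Lemma eq_openb u X Y : (forall i, i < tag u -> X i = Y i) -> openb u X = openb u Y.
Proof.
move=> eqXY; rewrite /openb (_ : [set i : 'I_(tag u) | X i] = [set i : 'I_(tag u) | Y i]) //.
by apply/setP=> i; rewrite !inE eqXY.
Qed.

Section OpenPredicates.
Variable u : tot.

Lemma openb0 : openb u pred0.
Proof.
rewrite /openb (_ : [set i | _] = set0); first by case/is_topologyP: (valP (tagged u)).
by apply/setP=> i; rewrite !inE.
Qed.

Lemma openbT : openb u predT.
Proof.
rewrite /openb (_ : [set i | _] = setT); first by case/is_topologyP: (valP (tagged u)).
by apply/setP=> i; rewrite !inE.
Qed.

Lemma openbU X Y : openb u X -> openb u Y -> openb u (predU X Y).
Proof.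
rewrite /openb (_ : [set i : 'I_(tag u) | predU X Y i] =
                    [set i : 'I_(tag u) | X i] :|: [set i : 'I_(tag u) | Y i]).
  by case/is_topologyP: (valP (tagged u)) => _ _ hU _; apply: hU.
by apply/setP=> i; rewrite !inE.
Qed.

Lemma openbI X Y : openb u X -> openb u Y -> openb u (predI X Y).
Proof.
rewrite /openb (_ : [set i : 'I_(tag u) | predI X Y i] =
                    [set i : 'I_(tag u) | X i] :&: [set i : 'I_(tag u) | Y i]).
  by case/is_topologyP: (valP (tagged u)) => _ _ _ hI; apply: hI.
by apply/setP=> i; rewrite !inE.
Qed.

Lemma openb_all X : all X (iota 0 (tag u)) -> openb u X.
Proof.
move/allP=> hX; rewrite (@eq_openb _ _ predT) ?openbT // => i ltiu.
by rewrite hX // mem_iota.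
Qed.

Lemma openb_none X : all (predC X) (iota 0 (tag u)) -> openb u X.
Proof.
move/allP=> hX; rewrite (@eq_openb _ _ pred0) ?openb0 // => i ltiu.
by apply/negbTE/hX; rewrite mem_iota.
Qed.

End OpenPredicates.

Definition nat_of_set k (O : {set 'I_k}) : pred nat :=
  fun i => [exists j in O, val j == i].

Section NatOfSet.
Variable k : nat.
Implicit Types O : {set 'I_k}.

Lemma nat_of_set_lt O i (ltik : i < k) :
  nat_of_set O i = (Ordinal ltik \in O).
Proof.
apply/exists_inP/idP => [[j jO /eqP eji]|iO]; last by exists (Ordinal ltik).
by rewrite (_ : Ordinal ltik = j) //; apply: val_inj.
Qed.

Lemma nat_of_set_ge O i : k <= i -> nat_of_set O i = false.
Proof.
by move=> leki; apply/exists_inP=> -[j _ /eqP eji]; move: (ltn_ord j); rewrite eji ltnNge leki.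
Qed.

Lemma nat_of_set_pred (P : pred nat) i : nat_of_set [set j : 'I_k | P j] i = (i < k) && P i.
Proof. by case: (ltnP i k) => h; [rewrite (nat_of_set_lt _ h) inE | rewrite nat_of_set_ge]. Qed.

Lemma nat_of_set0 i : nat_of_set (set0 : {set 'I_k}) i = false.
Proof. by case: (ltnP i k) => h; [rewrite (nat_of_set_lt _ h) inE | rewrite nat_of_set_ge]. Qed.

Lemma nat_of_setT i : nat_of_set [set: 'I_k] i = (i < k).
Proof. by case: (ltnP i k) => h; [rewrite (nat_of_set_lt _ h) inE | rewrite nat_of_set_ge]. Qed.

Lemma nat_of_setU O1 O2 i : nat_of_set (O1 :|: O2) i = nat_of_set O1 i || nat_of_set O2 i.
Proof. by case: (ltnP i k) => h; [rewrite !(nat_of_set_lt _ h) inE | rewrite !nat_of_set_ge]. Qed.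

Lemma nat_of_setI O1 O2 i : nat_of_set (O1 :&: O2) i = nat_of_set O1 i && nat_of_set O2 i.
Proof. by case: (ltnP i k) => h; [rewrite !(nat_of_set_lt _ h) inE | rewrite !nat_of_set_ge]. Qed.

Lemma nat_of_setK O : [set i : 'I_k | nat_of_set O i] = O.
Proof.
apply/setP=> i; rewrite inE (nat_of_set_lt _ (ltn_ord i)).
by rewrite (_ : Ordinal _ = i) //; apply: val_inj.
Qed.

End NatOfSet.

Lemma tot_ext u v : tag u = tag v -> openb u =1 openb v -> u = v.
Proof.
case: u v => [n T] [m T'] /= enm; subst m => eq_open; congr (Tagged _ _).
by apply/val_inj/setP=> O; move: (eq_open (nat_of_set O)); rewrite /openb /= nat_of_setK.
Qed.

Lemma lpart_pred n m (X : pred nat) :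
  lpart [set i : 'I_(n + m) | X i] = [set i : 'I_n | X i].
Proof. by apply/setP=> i; rewrite !inE. Qed.

Lemma rpart_pred n m (X : pred nat) :
  rpart [set i : 'I_(n + m) | X i] = [set j : 'I_m | X (n + j)].
Proof. by apply/setP=> j; rewrite !inE. Qed.

Lemma pred_setT_all k (P : pred nat) : ([set j : 'I_k | P j] == setT) = all P (iota 0 k).
Proof.
apply/eqP/allP => [PT i | Piota]; last first.
  by apply/setP=> j; rewrite !inE Piota // mem_iota ltn_ord.
by rewrite mem_iota => /andP[_ ltik]; move/setP/(_ (Ordinal ltik)): PT; rewrite !inE.
Qed.

Lemma pred_set0_all k (P : pred nat) :
  ([set j : 'I_k | P j] == set0) = all (predC P) (iota 0 k).
Proof.
apply/eqP/allP => [P0 i | Piota]; last first.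
  by apply/setP=> j; rewrite !inE; apply/negbTE/Piota; rewrite mem_iota ltn_ord.
by rewrite mem_iota => /andP[_ ltik]; move/setP/(_ (Ordinal ltik)): P0; rewrite !inE => ->.
Qed.

Lemma all_iota_addn (X : pred nat) a b c :
  all (fun i => X (a + i)) (iota b c) = all X (iota (a + b) c).
Proof. by rewrite iotaDl all_map. Qed.

Lemma openb_conc u v X :
  openb (bconc u v) X = openb u X && openb v (fun i => X (tag u + i)).
Proof.
by case: u v => [n T] [m T']; rewrite /openb /= val_tconc mem_conc_raw lpart_pred rpart_pred.
Qed.

Lemma openb_down u v X : openb (bdown u v) X =
  openb u X && all X (iota (tag u) (tag v)) ||
  all (predC X) (iota 0 (tag u)) && openb v (fun i => X (tag u + i)).
Proof.
case: u v => [n T] [m T']; rewrite /openb /= val_tdown mem_down_raw lpart_pred rpart_pred.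
by rewrite (pred_setT_all m (fun j => X (n + j))) pred_set0_all all_iota_addn addn0.
Qed.

Lemma openb_tag0 u X : tag u = 0 -> openb u X.
Proof. by move=> u0; apply: openb_all; rewrite u0. Qed.

Lemma tag_eq0 u : tag u = 0 -> u = tunit.
Proof. by move=> u0; apply: tot_ext => // X; rewrite !openb_tag0. Qed.

Lemma tag_gt0 u : u <> tunit -> 0 < tag u.
Proof. by rewrite lt0n => neq_u1; apply/eqP=> /tag_eq0. Qed.

Lemma tag_gt0_neq_tunit u : 0 < tag u -> u <> tunit.
Proof. by move=> + u1; rewrite u1. Qed.

Lemma bconc1u : left_id tunit bconc.
Proof. by move=> u; apply: tot_ext => // X; rewrite openb_conc openb_tag0. Qed.

Lemma bconcu1 : right_id tunit bconc.
Proof.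
move=> u; apply: tot_ext => [|X]; first by rewrite /= addn0.
by rewrite openb_conc (@openb_tag0 tunit) ?andbT.
Qed.

Lemma bconcA : associative bconc.
Proof.
move=> u v w; apply: tot_ext => [|X]; first by rewrite /= addnA.
rewrite !openb_conc andbA.
by congr (_ && _); apply: eq_openb => i _; rewrite /= addnA.
Qed.

Lemma bdown1u : left_id tunit bdown.
Proof.
move=> u; apply: tot_ext => // X; rewrite openb_down openb_tag0 //= orbC.
by case Xall: (all X _); rewrite ?orbF // (openb_all Xall).
Qed.

Lemma bdownu1 : right_id tunit bdown.
Proof.
move=> u; apply: tot_ext => [|X]; first by rewrite /= addn0.
rewrite openb_down (@openb_tag0 tunit) //= andbT.
by case Xnone: (all _ _); rewrite ?orbF // (openb_none Xnone) orbT.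
Qed.

Lemma bdownA : associative bdown.
Proof.
move=> u v w; apply: tot_ext => [|X]; first by rewrite /= addnA.
rewrite !openb_down /=.
rewrite (all_iota_addn (predC X)) all_iota_addn !iotaD !all_cat addn0 add0n.
rewrite (@eq_openb w (fun i => X (tag u + tag v + i)) (fun i => X (tag u + (tag v + i)))).
  case: (openb u X) (openb v _) (openb w _) => [] [] [];
  case: (all X (iota (tag u) _)) (all X (iota (_ + _) _)) => [] [];
  by case: (all _ (iota 0 _)) (all _ (iota (tag u) _)) => [] [].
by move=> i _; rewrite addnA.
Qed.

Lemma openb_conc_left v w X :
  openb (bconc v w) (fun i => (i < tag v) && X i) = openb v X.
Proof.
rewrite openb_conc (@eq_openb w _ pred0) => [|i _]; last by rewrite ltnNge leq_addr.
by rewrite openb0 andbT; apply: eq_openb => i ->.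
Qed.

Lemma openb_conc_right v w Y :
  openb (bconc v w) (fun i => (tag v <= i) && Y (i - tag v)) = openb w Y.
Proof.
rewrite openb_conc (@eq_openb v _ pred0) => [|i ltiv]; last by rewrite leqNgt ltiv.
by rewrite openb0; apply: eq_openb => i _; rewrite leq_addr addKn.
Qed.

Lemma openb_down_left v w X :
  openb (bdown v w) (fun i => (i < tag v) && X i || (tag v <= i)) = openb v X.
Proof.
rewrite openb_down (@eq_openb v _ X) => [|i ltiv]; last by rewrite ltiv leqNgt ltiv orbF.
have -> : all (fun i => (i < tag v) && X i || (tag v <= i)) (iota (tag v) (tag w)).
  by apply/allP=> i; rewrite mem_iota => /andP[-> _]; rewrite orbT.
rewrite andbT; case Xnone: (all _ _); last by rewrite orbF.
suff -> : openb v X by [].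
apply/openb_none/allP=> i iv; move/allP/(_ i iv): Xnone; move: iv.
by rewrite mem_iota => /andP[_ ltiv] /=; rewrite ltiv leqNgt ltiv orbF.
Qed.

Lemma openb_down_right v w Y :
  openb (bdown v w) (fun i => (tag v <= i) && Y (i - tag v)) = openb w Y.
Proof.
rewrite openb_down (@eq_openb v _ pred0) => [|i ltiv]; last by rewrite leqNgt ltiv.
rewrite openb0 (@eq_openb w _ Y) => [|i _]; last by rewrite leq_addr addKn.
have -> : all (predC (fun i => (tag v <= i) && Y (i - tag v))) (iota 0 (tag v)).
  by apply/allP=> i; rewrite mem_iota => /andP[_ ltiv] /=; rewrite leqNgt ltiv.
case Yall: (all _ (iota (tag v) _)) => //=; apply/esym/openb_all/allP=> i.
rewrite mem_iota => /andP[_ ltiw].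
move/allP/(_ (tag v + i)): Yall.
by rewrite mem_iota leq_addr ltn_add2l ltiw addKn => /(_ isT)/andP[].
Qed.

Definition conc_cut u k := forall X, openb u X ->
  openb u (fun i => (i < k) && X i) && openb u (fun i => (k <= i) && X i).

Definition down_cut u k := openb u (fun i => k <= i) /\ forall X, openb u X ->
  all X (iota k (tag u - k)) || all (predC X) (iota 0 k).

Lemma bconc_conc_cut v w : conc_cut (bconc v w) (tag v).
Proof.
move=> X; rewrite !openb_conc => /andP[openX openX']; apply/andP; split; apply/andP; split.
- by rewrite (@eq_openb v _ X) // => i ->.
- by rewrite (@eq_openb w _ pred0) ?openb0 // => i _; rewrite ltnNge leq_addr.
- by rewrite (@eq_openb v _ pred0) ?openb0 // => i ltiv; rewrite leqNgt ltiv.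
- by rewrite (@eq_openb w _ (fun i => X (tag v + i))) // => i _; rewrite leq_addr.
Qed.

Lemma bdown_down_cut v w : down_cut (bdown v w) (tag v).
Proof.
split.
  rewrite openb_down (@eq_openb v _ pred0) ?openb0 => [|i ltiv]; last by rewrite leqNgt ltiv.
  by apply/orP; left; apply/allP=> i; rewrite mem_iota => /andP[].
by move=> X; rewrite openb_down /= addKn => /orP[/andP[_ ->]|/andP[-> _]]; rewrite ?orbT.
Qed.

Lemma openb_preimage_topology u j (g : {set 'I_j} -> pred nat) :
  openb u (g set0) -> openb u (g setT) ->
  (forall O1 O2, g (O1 :|: O2) =1 predU (g O1) (g O2)) ->
  (forall O1 O2, g (O1 :&: O2) =1 predI (g O1) (g O2)) ->
  is_topology [set O | openb u (g O)].
Proof.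
move=> open0 openT gU gI; apply/is_topologyP; split; rewrite ?inE // => O1 O2; rewrite !inE.
  by rewrite (eq_openb (fun i _ => gU O1 O2 i)); apply: openbU.
by rewrite (eq_openb (fun i _ => gI O1 O2 i)); apply: openbI.
Qed.

Section CutFactorization.
Variables (u : tot) (k : nat).
Hypothesis le_k_u : k <= tag u.

Definition left_opens := [set O : {set 'I_k} | openb u (nat_of_set O)].
Definition right_opens :=
  [set O : {set 'I_(tag u - k)} | openb u (fun i => (k <= i) && nat_of_set O (i - k))].
Definition down_left_opens :=
  [set O : {set 'I_k} | openb u (fun i => nat_of_set O i || (k <= i))].

Lemma left_opens_topology : openb u (fun i => i < k) -> is_topology left_opens.
Proof.
move=> open_lt; apply: openb_preimage_topology => [||O1 O2 i|O1 O2 i].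
- by rewrite (@eq_openb _ _ pred0) ?openb0 // => i _; rewrite nat_of_set0.
- by rewrite (eq_openb (fun i _ => nat_of_setT k i)).
- exact: nat_of_setU.
- exact: nat_of_setI.
Qed.

Lemma right_opens_topology : openb u (fun i => k <= i) -> is_topology right_opens.
Proof.
move=> open_ge; apply: openb_preimage_topology => [||O1 O2 i|O1 O2 i] /=.
- by rewrite (@eq_openb _ _ pred0) ?openb0 // => i _; rewrite nat_of_set0 andbF.
- rewrite (@eq_openb _ _ (fun i => k <= i)) // => i ltiu.
  by rewrite nat_of_setT; case: leqP => //= leki; lia.
- by rewrite nat_of_setU andb_orr.
- by rewrite nat_of_setI andbACA andbb.
Qed.

Lemma down_left_opens_topology : openb u (fun i => k <= i) -> is_topology down_left_opens.
Proof.
move=> open_ge; apply: openb_preimage_topology => [||O1 O2 i|O1 O2 i] /=.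
- by rewrite (eq_openb (fun i _ => congr1 (orb^~ _) (nat_of_set0 k i))).
- by rewrite (@eq_openb _ _ predT) ?openbT // => i _; rewrite nat_of_setT; case: ltnP.
- by rewrite nat_of_setU orbACA orbb.
- by rewrite nat_of_setI orb_andl.
Qed.

Definition left_part (h : is_topology left_opens) : tot :=
  Tagged topo (exist _ left_opens h).
Definition right_part (h : is_topology right_opens) : tot :=
  Tagged topo (exist _ right_opens h).
Definition down_left_part (h : is_topology down_left_opens) : tot :=
  Tagged topo (exist _ down_left_opens h).

Lemma openb_left_part (h : is_topology left_opens) X :
  openb (left_part h) X = openb u (fun i => (i < k) && X i).
Proof. by rewrite {1}/openb inE; apply: eq_openb => i _; rewrite nat_of_set_pred. Qed.

Lemma openb_right_part (h : is_topology right_opens) Y :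
  openb (right_part h) Y = openb u (fun i => (k <= i) && Y (i - k)).
Proof.
rewrite {1}/openb inE; apply: eq_openb => i ltiu; rewrite nat_of_set_pred.
by case: (leqP k i) => //= leki; rewrite (_ : i - k < tag u - k = true) //; lia.
Qed.

Lemma openb_down_left_part (h : is_topology down_left_opens) X :
  openb (down_left_part h) X = openb u (fun i => (i < k) && X i || (k <= i)).
Proof. by rewrite {1}/openb inE; apply: eq_openb => i _; rewrite nat_of_set_pred. Qed.

Lemma conc_cut_factor : conc_cut u k -> exists v w, tag v = k /\ u = bconc v w.
Proof.
move=> cut_k; have /andP[open_lt open_ge] := cut_k _ (openbT u).
have hL : is_topology left_opens.
  by apply: left_opens_topology; rewrite (eq_openb (fun i _ => esym (andbT (i < k)))).
have hR : is_topology right_opens.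
  by apply: right_opens_topology; rewrite (eq_openb (fun i _ => esym (andbT (k <= i)))).
exists (left_part hL), (right_part hR); split => //.
apply/esym/tot_ext => [|X]; first exact: subnKC.
rewrite openb_conc openb_left_part openb_right_part /=.
rewrite (@eq_openb u (fun i => (k <= i) && _) (fun i => (k <= i) && X i)); last first.
  by move=> i _; case: (leqP k i) => // leki; rewrite subnKC.
apply/andP/idP => [[openL openR]|/cut_k/andP//].
rewrite (@eq_openb u _ (predU (fun i => (i < k) && X i) (fun i => (k <= i) && X i))).
  exact: openbU.
by move=> i _ /=; case: ltnP; rewrite ?orbF.
Qed.

Lemma down_cut_factor : down_cut u k -> exists v w, tag v = k /\ u = bdown v w.
Proof.
move=> [open_ge cut_k].
have hL := down_left_opens_topology open_ge; have hR := right_opens_topology open_ge.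
exists (down_left_part hL), (right_part hR); split => //.
apply/esym/tot_ext => [|X]; first exact: subnKC.
rewrite openb_down openb_down_left_part openb_right_part /=.
rewrite (@eq_openb u (fun i => (k <= i) && _) (fun i => (k <= i) && X i)); last first.
  by move=> i _; case: (leqP k i) => // leki; rewrite subnKC.
have left_openE : all X (iota k (tag u - k)) ->
    openb u (fun i => (i < k) && X i || (k <= i)) = openb u X.
  move/allP=> Xall; apply: eq_openb => i ltiu.
  case: (ltnP i k) => [_|leki]; first by rewrite orbF.
  by rewrite orbT Xall // mem_iota subnKC ?leki.
have right_openE : all (predC X) (iota 0 k) -> openb u (fun i => (k <= i) && X i) = openb u X.
  move/allP=> Xnone; apply: eq_openb => i _; case: (leqP k i) => //= ltik.
  by apply/esym/negbTE/Xnone; rewrite mem_iota.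
case Xall: (all X _); case Xnone: (all (predC X) _) => /=.
- by rewrite left_openE ?right_openE ?andbT ?orbb.
- by rewrite left_openE ?andbT ?orbF.
- by rewrite andbF right_openE.
- by rewrite andbF; apply/esym/negP=> /cut_k; rewrite Xall Xnone.
Qed.

End CutFactorization.

Lemma conc_cut_not_indecomposable u k : 0 < k < tag u -> conc_cut u k -> ~ indecomposable u.
Proof.
case/andP=> k_gt0 lt_k_u /(conc_cut_factor (ltnW lt_k_u)) [v [w [vk def_u]]] [_]; apply.
exists v, w; split; [|split] => //; apply: tag_gt0_neq_tunit; move: lt_k_u; rewrite def_u /=; lia.
Qed.

Lemma down_cut_not_down_indecomposable u k :
  0 < k < tag u -> down_cut u k -> ~ down_indecomposable u.
Proof.
case/andP=> k_gt0 lt_k_u /(down_cut_factor (ltnW lt_k_u)) [v [w [vk def_u]]] [_]; apply.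
exists v, w; split; [|split] => //; apply: tag_gt0_neq_tunit; move: lt_k_u; rewrite def_u /=; lia.
Qed.

Lemma conc_cut_bconcl v w k : conc_cut (bconc v w) k -> conc_cut v k.
Proof.
move=> cut_k X; rewrite -(openb_conc_left v w) => /cut_k/andP[].
rewrite !openb_conc => /andP[openL _] /andP[openR _]; apply/andP; split.
  by rewrite (@eq_openb v _ (fun i => (i < k) && ((i < tag v) && X i))) // => i ->.
by rewrite (@eq_openb v _ (fun i => (k <= i) && ((i < tag v) && X i))) // => i ->.
Qed.

Lemma down_cut_bdownl v w k : k < tag v -> down_cut (bdown v w) k -> down_cut v k.
Proof.
move=> lt_k_v [open_ge cut_k]; split.
  move: open_ge; rewrite openb_down => /orP[/andP[-> _] //|/andP[/allP/(_ k) k_notin _]].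
  by move: k_notin; rewrite mem_iota lt_k_v /= leqnn => /(_ isT).
move=> X; rewrite -(openb_down_left v w) => /cut_k /=.
case/orP=> /allP Xall; apply/orP; [left|right]; apply/allP=> i.
  rewrite mem_iota => /andP[le_k_i lt_i]; have lt_i_v : i < tag v by lia.
  have /Xall : i \in iota k (tag v + tag w - k) by rewrite mem_iota le_k_i; lia.
  by rewrite /= lt_i_v leqNgt lt_i_v orbF.
rewrite mem_iota => /andP[_ lt_i]; have lt_i_v : i < tag v by lia.
have /Xall : i \in iota 0 k by rewrite mem_iota.
by rewrite /= lt_i_v leqNgt lt_i_v orbF.
Qed.

Lemma tag_lt_indecomposable_bconc v w v' w' : bconc v w = bconc v' w' ->
  0 < tag v -> tag v < tag v' -> ~ indecomposable v'.
Proof.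
move=> eq_vw tag_v_gt0 lt_v_v'; apply: (@conc_cut_not_indecomposable _ (tag v)).
  by rewrite tag_v_gt0.
by apply: (@conc_cut_bconcl _ w'); rewrite -eq_vw; apply: bconc_conc_cut.
Qed.

Lemma indecomposable_bconc_inj v w v' w' : indecomposable v -> indecomposable v' ->
  bconc v w = bconc v' w' -> v = v' /\ w = w'.
Proof.
move=> indv indv' eq_vw.
have eq_tag : tag v = tag v'.
  case: (ltngtP (tag v) (tag v')) => // lt_tag.
    by case: (tag_lt_indecomposable_bconc eq_vw (tag_gt0 indv.1) lt_tag indv').
  by case: (tag_lt_indecomposable_bconc (esym eq_vw) (tag_gt0 indv'.1) lt_tag indv).
have eq_tag_w : tag w = tag w' by have := congr1 tag eq_vw; rewrite /= eq_tag; apply: addnI.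
split; apply: tot_ext => // X.
  by rewrite -(openb_conc_left v w) eq_vw eq_tag openb_conc_left.
by rewrite -(openb_conc_right v w) eq_vw eq_tag openb_conc_right.
Qed.

Lemma tag_lt_down_indecomposable_bdown v w v' w' : bdown v w = bdown v' w' ->
  0 < tag v -> tag v < tag v' -> ~ down_indecomposable v'.
Proof.
move=> eq_vw tag_v_gt0 lt_v_v'; apply: (@down_cut_not_down_indecomposable _ (tag v)).
  by rewrite tag_v_gt0.
by apply: (@down_cut_bdownl _ w') => //; rewrite -eq_vw; apply: bdown_down_cut.
Qed.

Lemma down_indecomposable_bdown_inj v w v' w' :
  down_indecomposable v -> down_indecomposable v' ->
  bdown v w = bdown v' w' -> v = v' /\ w = w'.
Proof.
move=> indv indv' eq_vw.
have eq_tag : tag v = tag v'.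
  case: (ltngtP (tag v) (tag v')) => // lt_tag.
    by case: (tag_lt_down_indecomposable_bdown eq_vw (tag_gt0 indv.1) lt_tag indv').
  by case: (tag_lt_down_indecomposable_bdown (esym eq_vw) (tag_gt0 indv'.1) lt_tag indv).
have eq_tag_w : tag w = tag w' by have := congr1 tag eq_vw; rewrite /= eq_tag; apply: addnI.
split; apply: tot_ext => // X.
  by rewrite -(openb_down_left v w) eq_vw eq_tag openb_down_left.
by rewrite -(openb_down_right v w) eq_vw eq_tag openb_down_right.
Qed.

Lemma bconc_neq_bdown v w v' w' : v <> tunit -> w <> tunit -> v' <> tunit -> w' <> tunit ->
  bconc v w <> bdown v' w'.
Proof.
move=> /tag_gt0 v_gt0 /tag_gt0 w_gt0 /tag_gt0 v'_gt0 /tag_gt0 w'_gt0 eq_vw.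
have eq_tag : tag v + tag w = tag v' + tag w' := congr1 tag eq_vw.
have: openb (bconc v w) (fun i => (i < tag v) && predT i) by rewrite openb_conc_left openbT.
rewrite eq_vw => /(bdown_down_cut v' w').2; rewrite /= addKn => /orP[]/allP Xall.
  have /Xall : (tag v' + tag w').-1 \in iota (tag v') (tag w') by rewrite mem_iota; lia.
  by rewrite /= andbT; lia.
have /Xall : 0 \in iota 0 (tag v') by rewrite mem_iota.
by rewrite /= v_gt0.
Qed.

Lemma tag_ind (P : tot -> Prop) :
  (forall u, (forall v, tag v < tag u -> P v) -> P u) -> forall u, P u.
Proof.
move=> IH; suff IHn n : forall u, tag u < n -> P u by move=> u; apply: (IHn (tag u).+1).
elim: n => [//|n IHn] u lt_u_n; apply: IH => v lt_v_u.
by apply: IHn; apply: leq_trans lt_v_u lt_u_n.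
Qed.

Section GradedMonoid.
Variable bm : tot -> tot -> tot.
Hypothesis bmA : associative bm.
Hypothesis tag_bm : forall u v, tag (bm u v) = tag u + tag v.

Definition indecomposable_wrt (u : tot) : Prop :=
  u <> tunit /\ ~ (exists v w, v <> tunit /\ w <> tunit /\ u = bm v w).

Lemma tag_bm_ltl v w : w <> tunit -> tag v < tag (bm v w).
Proof. by move/tag_gt0; rewrite tag_bm -{1}[tag v]addn0 ltn_add2l. Qed.

Lemma tag_bm_ltr v w : v <> tunit -> tag w < tag (bm v w).
Proof. by move/tag_gt0; rewrite tag_bm -{1}[tag w]add0n ltn_add2r. Qed.

Lemma not_indecomposable_split u : u <> tunit -> ~ indecomposable_wrt u ->
  exists v w, v <> tunit /\ w <> tunit /\ u = bm v w.
Proof. by move=> u_neq1 u_dec; apply: NNPP => no_split; apply: u_dec. Qed.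

Definition first_split u v w := [/\ indecomposable_wrt v, w <> tunit & u = bm v w].

Lemma first_split_tag u v w : first_split u v w -> tag v < tag u /\ tag w < tag u.
Proof. by case=> v_ind w_neq1 ->; split; [apply: tag_bm_ltl | apply: tag_bm_ltr v_ind.1]. Qed.

Lemma indecomposable_no_first_split u : indecomposable_wrt u -> forall v w, ~ first_split u v w.
Proof. by case=> _ u_ind v w [v_ind w_neq1 def_u]; apply: u_ind; exists v, w; case: v_ind. Qed.

Lemma exists_first_split u : u <> tunit -> ~ indecomposable_wrt u ->
  exists v w, first_split u v w.
Proof.
elim/tag_ind: u => u IH u_neq1 u_dec.
have [v [w [v_neq1 [w_neq1 def_u]]]] := not_indecomposable_split u_neq1 u_dec.
have [v_ind|v_dec] := classic (indecomposable_wrt v); first by exists v, w.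
have lt_v_u : tag v < tag u by rewrite def_u; apply: tag_bm_ltl.
have [v1 [v2 [v1_ind v2_neq1 def_v]]] := IH v lt_v_u v_neq1 v_dec.
exists v1, (bm v2 w); split=> //; last by rewrite def_u def_v bmA.
by apply: tag_gt0_neq_tunit; apply: leq_ltn_trans (tag_bm_ltl _ w_neq1).
Qed.

Hypothesis bm1u : left_id tunit bm.
Hypothesis bmu1 : right_id tunit bm.

Lemma multiplicative_first_split (A : Type) (e : A) (mA : A -> A -> A) (f : tot -> A) :
    associative mA -> left_id e mA -> right_id e mA -> f tunit = e ->
    (forall u v w, first_split u v w -> f u = mA (f v) (f w)) ->
  forall u v, f (bm u v) = mA (f u) (f v).
Proof.
move=> mAA mA1u mAu1 f1 f_split; elim/tag_ind=> u IH v.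
have [->|u_neq1] := classic (u = tunit); first by rewrite bm1u f1 mA1u.
have [->|v_neq1] := classic (v = tunit); first by rewrite bmu1 f1 mAu1.
have [u_ind|u_dec] := classic (indecomposable_wrt u); first exact: f_split.
have [u1 [u2 [u1_ind u2_neq1 def_u]]] := exists_first_split u_neq1 u_dec.
have u2v_neq1 : bm u2 v <> tunit.
  by apply: tag_gt0_neq_tunit; apply: leq_trans (tag_bm_ltl _ v_neq1).
have lt_u2_u : tag u2 < tag u by rewrite def_u; apply: tag_bm_ltr u1_ind.1.
rewrite def_u -bmA (f_split _ u1 (bm u2 v)) // (f_split (bm u1 u2) u1 u2) //.
by rewrite IH // mAA.
Qed.

End GradedMonoid.

Definition choose_split (D : tot -> tot -> tot -> Prop) (u : tot) : option (tot * tot) :=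
  match excluded_middle_informative (exists p : tot * tot, D u p.1 p.2) with
  | left split_u => Some (proj1_sig (constructive_indefinite_description _ split_u))
  | right _ => None
  end.

Variant choose_split_spec (D : tot -> tot -> tot -> Prop) (u : tot) :
    option (tot * tot) -> Prop :=
  | SplitSome v w of D u v w : choose_split_spec D u (Some (v, w))
  | SplitNone of (forall v w, ~ D u v w) : choose_split_spec D u None.

Lemma choose_splitP D u : choose_split_spec D u (choose_split D u).
Proof.
rewrite /choose_split; case: excluded_middle_informative => [split_u|no_split].
  by case: constructive_indefinite_description => -[v w]; constructor.
by constructor=> v w Duvw; apply: no_split; exists (v, w).
Qed.

Section FirstFactorRecursion.
Variables (A : Type) (e : A) (m1 m2 : A -> A -> A) (a : tot -> A).
Variables D1 D2 : tot -> tot -> tot -> Prop.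
Hypothesis D1_tag : forall u v w, D1 u v w -> tag v < tag u /\ tag w < tag u.
Hypothesis D2_tag : forall u v w, D2 u v w -> tag v < tag u /\ tag w < tag u.
Hypothesis D1_inj : forall u v w v' w', D1 u v w -> D1 u v' w' -> v = v' /\ w = w'.
Hypothesis D2_inj : forall u v w v' w', D2 u v w -> D2 u v' w' -> v = v' /\ w = w'.
Hypothesis D1_D2 : forall u v w v' w', D1 u v w -> D2 u v' w' -> False.

Definition rec_step (F : tot -> A) (u : tot) : A :=
  if choose_split D1 u is Some (v, w) then m1 (F v) (F w)
  else if choose_split D2 u is Some (v, w) then m2 (F v) (F w)
  else if u == tunit then e else a u.

Fixpoint rec_iter k : tot -> A :=
  if k is k'.+1 then rec_step (rec_iter k') else fun=> e.

(* Recursive calls decrease [tag], so [tag u + 1] steps of fuel suffice. *)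
Definition rec_fun (u : tot) : A := rec_iter (tag u).+1 u.

Lemma rec_iter_stable k k' u : tag u < k -> tag u < k' -> rec_iter k u = rec_iter k' u.
Proof.
elim: k k' u => [|k IH] [|k'] u // lt_u_k lt_u_k' /=; rewrite /rec_step.
case: choose_splitP => [v w /D1_tag[lt_v lt_w]|_].
  by rewrite (IH k' v) ?(IH k' w) //; lia.
case: choose_splitP => [v w /D2_tag[lt_v lt_w]|_] //.
by rewrite (IH k' v) ?(IH k' w) //; lia.
Qed.

Lemma rec_funE u : rec_fun u = rec_step rec_fun u.
Proof.
rewrite -[LHS]/(rec_step (rec_iter (tag u)) u) /rec_step /rec_fun.
case: choose_splitP => [v w /D1_tag[lt_v lt_w]|_].
  by rewrite (@rec_iter_stable _ (tag v).+1 v) ?(@rec_iter_stable _ (tag w).+1 w).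
case: choose_splitP => [v w /D2_tag[lt_v lt_w]|_] //.
by rewrite (@rec_iter_stable _ (tag v).+1 v) ?(@rec_iter_stable _ (tag w).+1 w).
Qed.

Lemma rec_fun_unit : rec_fun tunit = e.
Proof.
rewrite rec_funE /rec_step.
case: choose_splitP => [v w /D1_tag[]|_] //; case: choose_splitP => [v w /D2_tag[]|_] //.
by rewrite eqxx.
Qed.

Lemma rec_fun_D1 u v w : D1 u v w -> rec_fun u = m1 (rec_fun v) (rec_fun w).
Proof.
move=> Duvw; rewrite rec_funE /rec_step.
case: choose_splitP => [v' w' /D1_inj/(_ Duvw)[-> ->] //|no_split].
by case: (no_split _ _ Duvw).
Qed.

Lemma rec_fun_D2 u v w : D2 u v w -> rec_fun u = m2 (rec_fun v) (rec_fun w).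
Proof.
move=> Duvw; rewrite rec_funE /rec_step.
case: choose_splitP => [v' w' /D1_D2/(_ Duvw)[]|_].
case: choose_splitP => [v' w' /D2_inj/(_ Duvw)[-> ->] //|no_split].
by case: (no_split _ _ Duvw).
Qed.

Lemma rec_fun_gen u : u <> tunit -> (forall v w, ~ D1 u v w) -> (forall v w, ~ D2 u v w) ->
  rec_fun u = a u.
Proof.
move=> /eqP/negPf u_neq1 no_D1 no_D2; rewrite rec_funE /rec_step u_neq1.
by case: choose_splitP => [v w /no_D1|_] //; case: choose_splitP => [v w /no_D2|_].
Qed.

End FirstFactorRecursion.

Section LinearExtension.
Local Open Scope ring_scope.
Variable K : fieldType.

Section LinearMaps.
Variables (U V : lmodType K) (g : U -> V).
Hypothesis g_linear : linear g.

Let gL : {linear U -> V} := HB.pack g (GRing.isLinear.Build K U V *:%R g g_linear).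

Lemma linear_sum_of (I : Type) (s : seq I) (F : I -> U) :
  g (\sum_(i <- s) F i) = \sum_(i <- s) g (F i).
Proof. exact: (linear_sum gL). Qed.

Lemma linearZ_of c x : g (c *: x) = c *: g x.
Proof. exact: (linearZ_LR gL). Qed.

End LinearMaps.

Definition hmul (bm : tot -> tot -> tot) (x y : HT K) : HT K :=
  \sum_(u <- msupp x) \sum_(v <- msupp y) << (x@_u * y@_v) *g bm u v >>.

Lemma msupp_hb u : msupp (hb K u) = [fset u]%fset.
Proof. by rewrite /hb msuppU oner_eq0. Qed.

Lemma mcoeff_hb u : (hb K u)@_u = 1.
Proof. by rewrite /hb mcoeffUU. Qed.

Lemma hmul_hb bm v w : hmul bm (hb K v) (hb K w) = hb K (bm v w).
Proof.
rewrite /hmul; move: (msupp_hb v) (msupp_hb w) (mcoeff_hb v) (mcoeff_hb w).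
by move: (hb K v) (hb K w) => x y -> -> x_v y_w; rewrite !big_seq_fset1 x_v y_w mul1r.
Qed.

Lemma monalgU_scale (c : K) u : << c *g u >> = c *: hb K u :> HT K.
Proof. by apply/malgP => k; rewrite mcoeffZ !mcoeffU mulr_natr. Qed.

Variables (A : lmodType K) (f : tot -> A).

Definition lin_ext (x : HT K) : A := \sum_(u <- msupp x) x@_u *: f u.

Lemma lin_ext_fsub (d : {fset tot}) x :
  (msupp x `<=` d)%fset -> lin_ext x = \sum_(u <- d) x@_u *: f u.
Proof.
move=> le_x_d; rewrite /lin_ext [LHS](big_fset_incl _ le_x_d) // => u _ /mcoeff_outdom ->.
by rewrite scale0r.
Qed.

Lemma lin_ext_linear : linear lin_ext.
Proof.
move=> c x y; set d := (msupp x `|` msupp y `|` msupp (c *: x + y))%fset.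
rewrite (@lin_ext_fsub d (c *: x + y)) ?(@lin_ext_fsub d x) ?(@lin_ext_fsub d y); first last.
- by apply/fsubsetP => z hz; rewrite !inE hz ?orbT.
- by apply/fsubsetP => z hz; rewrite !inE hz ?orbT.
- by apply/fsubsetP => z hz; rewrite !inE hz ?orbT.
rewrite scaler_sumr -big_split; apply: eq_bigr => u _.
by rewrite mcoeffD mcoeffZ scalerDl scalerA.
Qed.

Lemma lin_ext_monalgU c w : lin_ext << c *g w >> = c *: f w.
Proof. by rewrite (@lin_ext_fsub [fset w]%fset) ?msuppU_le // big_seq_fset1 mcoeffUU. Qed.

Lemma lin_ext_hb w : lin_ext (hb K w) = f w.
Proof. by rewrite lin_ext_monalgU scale1r. Qed.

Lemma lin_ext_hmul bm (mA : A -> A -> A) :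
    (forall x, linear (mA x)) -> (forall y, linear (mA^~ y)) ->
    (forall u v, f (bm u v) = mA (f u) (f v)) ->
  forall x y, lin_ext (hmul bm x y) = mA (lin_ext x) (lin_ext y).
Proof.
move=> mA_linr mA_linl f_mul x y; rewrite /hmul (linear_sum_of lin_ext_linear).
rewrite [in RHS]/lin_ext (linear_sum_of (mA_linl _)); apply: eq_bigr => u _.
rewrite (linear_sum_of lin_ext_linear) (linearZ_of (mA_linl _)) /lin_ext.
rewrite (linear_sum_of (mA_linr _)) scaler_sumr; apply: eq_bigr => v _.
by rewrite -/(lin_ext _) lin_ext_monalgU (linearZ_of (mA_linr _)) f_mul scalerA.
Qed.

Lemma eq_lin_ext (psi : HT K -> A) : linear psi -> (forall u, psi (hb K u) = f u) ->
  psi =1 lin_ext.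
Proof.
move=> psi_linear psi_hb x; rewrite {1}(monalgE x) (linear_sum_of psi_linear).
by apply: eq_bigr => u _; rewrite monalgU_scale (linearZ_of psi_linear) psi_hb.
Qed.

End LinearExtension.

Definition graded_monoid (bm : tot -> tot -> tot) : Prop :=
  [/\ left_id tunit bm, right_id tunit bm, associative bm
    & forall u v, tag (bm u v) = tag u + tag v].

Definition unique_first_factor (bm : tot -> tot -> tot) : Prop :=
  forall v w v' w', indecomposable_wrt bm v -> indecomposable_wrt bm v' ->
  bm v w = bm v' w' -> v = v' /\ w = w'.

Lemma graded_monoid_bconc : graded_monoid bconc.
Proof. by split; [exact: bconc1u | exact: bconcu1 | exact: bconcA |]. Qed.

Lemma graded_monoid_bdown : graded_monoid bdown.
Proof. by split; [exact: bdown1u | exact: bdownu1 | exact: bdownA |]. Qed.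

Lemma first_split_inj bm : unique_first_factor bm ->
  forall u v w v' w', first_split bm u v w -> first_split bm u v' w' -> v = v' /\ w = w'.
Proof. by move=> bm_first u v w v' w' [v_ind _ ->] [v'_ind _ /bm_first]; apply. Qed.

Lemma eq_multiplicative (A : Type) (bm1 bm2 : tot -> tot -> tot) (m1 m2 : A -> A -> A)
    (f g : tot -> A) :
    graded_monoid bm1 -> graded_monoid bm2 -> f tunit = g tunit ->
    (forall u, indecomposable_wrt bm1 u -> indecomposable_wrt bm2 u -> f u = g u) ->
    (forall u v, f (bm1 u v) = m1 (f u) (f v)) -> (forall u v, g (bm1 u v) = m1 (g u) (g v)) ->
    (forall u v, f (bm2 u v) = m2 (f u) (f v)) -> (forall u v, g (bm2 u v) = m2 (g u) (g v)) ->
  f =1 g.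
Proof.
move=> [_ _ _ tag_bm1] [_ _ _ tag_bm2] f1 f_gen f_mul1 g_mul1 f_mul2 g_mul2.
elim/tag_ind=> u IH; have [->//|u_neq1] := classic (u = tunit).
have [ind1|/(not_indecomposable_split u_neq1)[v [w [v_neq1 [w_neq1 def_u]]]]] :=
  classic (indecomposable_wrt bm1 u); last first.
  have lt_v_u : tag v < tag u by rewrite def_u; apply: tag_bm_ltl.
  have lt_w_u : tag w < tag u by rewrite def_u; apply: tag_bm_ltr.
  by rewrite def_u f_mul1 g_mul1 !IH.
have [ind2|/(not_indecomposable_split u_neq1)[v [w [v_neq1 [w_neq1 def_u]]]]] :=
  classic (indecomposable_wrt bm2 u); first exact: f_gen.
have lt_v_u : tag v < tag u by rewrite def_u; apply: tag_bm_ltl.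
have lt_w_u : tag w < tag u by rewrite def_u; apply: tag_bm_ltr.
by rewrite def_u f_mul2 g_mul2 !IH.
Qed.

Section FreeGeneration.
Variables (K : fieldType) (A : lmodType K).

Lemma unital_morph_lin_ext bm (mA : A -> A -> A) e (f : tot -> A) :
    (forall x, linear (mA x)) -> (forall y, linear (mA^~ y)) -> f tunit = e ->
    (forall u v, f (bm u v) = mA (f u) (f v)) ->
  unital_morph (hmul bm) mA e (lin_ext f).
Proof.
move=> mA_linr mA_linl f1 f_mul; rewrite /unital_morph; split; first exact: lin_ext_linear.
  by rewrite /hunit lin_ext_hb.
exact: lin_ext_hmul.
Qed.

Lemma unital_morph_hb bm (mA : A -> A -> A) e (psi : HT K -> A) :
    unital_morph (hmul bm) mA e psi ->
  psi (hb K tunit) = e /\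
  forall u v, psi (hb K (bm u v)) = mA (psi (hb K u)) (psi (hb K v)).
Proof. by case=> _ psi1 psi_mul; split=> // u v; rewrite -hmul_hb psi_mul. Qed.

Lemma free_graded_monoid bm (mA : A -> A -> A) e :
    graded_monoid bm -> unique_first_factor bm ->
    (forall x, linear (mA x)) -> (forall y, linear (mA^~ y)) ->
    associative mA -> left_id e mA -> right_id e mA ->
  forall a : tot -> A, exists phi : HT K -> A,
    (unital_morph (hmul bm) mA e phi /\ on_gens (indecomposable_wrt bm) a phi) /\
    forall psi : HT K -> A,
      unital_morph (hmul bm) mA e psi /\ on_gens (indecomposable_wrt bm) a psi ->
      forall x, psi x = phi x.
Proof.
move=> bm_graded bm_first mA_linr mA_linl mAA mA1u mAu1 a.
have [bm1u bmu1 bmA tag_bm] := bm_graded.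
pose no_split (u v w : tot) := False.
have split_tag := first_split_tag tag_bm.
have split_inj := first_split_inj bm_first.
set f := rec_fun e mA mA a (first_split bm) no_split.
have f1 : f tunit = e by apply: rec_fun_unit split_tag _.
have f_mul : forall u v, f (bm u v) = mA (f u) (f v).
  apply: multiplicative_first_split => // u v w; exact: rec_fun_D1.
have f_gen u : indecomposable_wrt bm u -> f u = a u.
  move=> u_ind; apply: rec_fun_gen => //; first exact: u_ind.1.
    exact: indecomposable_no_first_split.
  by move=> v w [].
exists (lin_ext f); split.
  by split; [exact: unital_morph_lin_ext | move=> u /f_gen <-; exact: lin_ext_hb].
move=> psi [psi_morph psi_gen]; apply: eq_lin_ext; first by case: psi_morph.
have [psi1 psi_mul] := unital_morph_hb psi_morph.
have psi_f1 : psi (hb K tunit) = f tunit by rewrite psi1 f1.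
apply: (eq_multiplicative bm_graded bm_graded psi_f1 _ psi_mul f_mul psi_mul f_mul).
by move=> u u_ind _; rewrite psi_gen ?f_gen.
Qed.

Lemma free_two_graded_monoids bm1 bm2 (m1 m2 : A -> A -> A) e :
    graded_monoid bm1 -> unique_first_factor bm1 ->
    graded_monoid bm2 -> unique_first_factor bm2 ->
    (forall u v w v' w', first_split bm1 u v w -> first_split bm2 u v' w' -> False) ->
    two_assoc m1 m2 e ->
  forall a : tot -> A, exists phi : HT K -> A,
    (unital_morph (hmul bm1) m1 e phi /\ unital_morph (hmul bm2) m2 e phi /\
     on_gens (fun u => indecomposable_wrt bm1 u /\ indecomposable_wrt bm2 u) a phi) /\
    forall psi : HT K -> A,
      unital_morph (hmul bm1) m1 e psi /\ unital_morph (hmul bm2) m2 e psi /\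
      on_gens (fun u => indecomposable_wrt bm1 u /\ indecomposable_wrt bm2 u) a psi ->
      forall x, psi x = phi x.
Proof.
move=> bm1_graded bm1_first bm2_graded bm2_first split12.
move=> [[m1_linr m1_linl] [m2_linr m2_linl] [m1A m2A] [m11u m1u1] [m21u m2u1]] a.
have [bm1_1u bm1_u1 bm1A tag_bm1] := bm1_graded.
have [bm2_1u bm2_u1 bm2A tag_bm2] := bm2_graded.
have split1_tag := first_split_tag tag_bm1; have split2_tag := first_split_tag tag_bm2.
have split1_inj := first_split_inj bm1_first; have split2_inj := first_split_inj bm2_first.
set f := rec_fun e m1 m2 a (first_split bm1) (first_split bm2).
have f1 : f tunit = e by apply: rec_fun_unit split1_tag split2_tag.
have f_mul1 : forall u v, f (bm1 u v) = m1 (f u) (f v).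
  by apply: multiplicative_first_split => // u v w; apply: rec_fun_D1.
have f_mul2 : forall u v, f (bm2 u v) = m2 (f u) (f v).
  by apply: multiplicative_first_split => // u v w; apply: rec_fun_D2.
have f_gen u : indecomposable_wrt bm1 u -> indecomposable_wrt bm2 u -> f u = a u.
  move=> u_ind1 u_ind2; apply: rec_fun_gen => //; first exact: u_ind1.1.
    exact: indecomposable_no_first_split.
  exact: indecomposable_no_first_split.
exists (lin_ext f); split.
  split; [exact: unital_morph_lin_ext | split; first exact: unital_morph_lin_ext].
  by move=> u [u_ind1 u_ind2]; rewrite lin_ext_hb f_gen.
move=> psi [psi_morph1 [psi_morph2 psi_gen]]; apply: eq_lin_ext; first by case: psi_morph1.
have [psi1 psi_mul1] := unital_morph_hb psi_morph1.
have [_ psi_mul2] := unital_morph_hb psi_morph2.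
have psi_f1 : psi (hb K tunit) = f tunit by rewrite psi1 f1.
apply: (eq_multiplicative bm1_graded bm2_graded psi_f1 _ psi_mul1 f_mul1 psi_mul2 f_mul2).
by move=> u u_ind1 u_ind2; rewrite psi_gen ?f_gen.
Qed.

End FreeGeneration.

Lemma first_split_bconc_bdown u v w v' w' :
  first_split bconc u v w -> first_split bdown u v' w' -> False.
Proof.
move=> [v_ind w_neq1 ->] [v'_ind w'_neq1].
exact: bconc_neq_bdown v_ind.1 w_neq1 v'_ind.1 w'_neq1.
Qed.

Local Open Scope ring_scope.

Lemma alg_two_assoc (K : fieldType) (A : algType K) : two_assoc (@GRing.mul A) *%R 1.
Proof.
have mul_linr (x : A) : linear (GRing.mul x) by move=> c u v; rewrite mulrDr scalerAr.
have mul_linl (y : A) : linear (GRing.mul^~ y) by move=> c u v; rewrite mulrDl scalerAl.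
by split; split; [exact: mul_linr | exact: mul_linl | exact: mul_linr | exact: mul_linl
  | exact: mulrA | exact: mulrA | exact: mul1r | exact: mulr1 | exact: mul1r | exact: mulr1].
Qed.

Theorem proposition5 (K : fieldType) :
  (forall (A : algType K) (a : tot -> A),
     exists phi : HT K -> A,
       (unital_morph (@hconc K) *%R 1 phi /\ on_gens indecomposable a phi) /\
       forall psi : HT K -> A,
         unital_morph (@hconc K) *%R 1 psi /\ on_gens indecomposable a psi ->
         forall x, psi x = phi x) /\
  (forall (A : algType K) (a : tot -> A),
     exists phi : HT K -> A,
       (unital_morph (@hdown K) *%R 1 phi /\ on_gens down_indecomposable a phi) /\
       forall psi : HT K -> A,
         unital_morph (@hdown K) *%R 1 psi /\ on_gens down_indecomposable a psi ->
         forall x, psi x = phi x) /\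
  (forall (A : lmodType K) (m1 m2 : A -> A -> A) (e : A),
     two_assoc m1 m2 e ->
     forall a : tot -> A,
     exists phi : HT K -> A,
       (unital_morph (@hconc K) m1 e phi /\ unital_morph (@hdown K) m2 e phi /\
        on_gens bi_indecomposable a phi) /\
       forall psi : HT K -> A,
         unital_morph (@hconc K) m1 e psi /\ unital_morph (@hdown K) m2 e psi /\
         on_gens bi_indecomposable a psi ->
         forall x, psi x = phi x).
Proof.
split; [|split] => [A|A|A m1 m2 e A_two_assoc].
- have [[mul_linr mul_linl] _ [mulA _] [mul1 mul1'] _] := alg_two_assoc A.
  exact: free_graded_monoid graded_monoid_bconc indecomposable_bconc_inj
    mul_linr mul_linl mulA mul1 mul1'.
- have [[mul_linr mul_linl] _ [mulA _] [mul1 mul1'] _] := alg_two_assoc A.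
  exact: free_graded_monoid graded_monoid_bdown down_indecomposable_bdown_inj
    mul_linr mul_linl mulA mul1 mul1'.
- exact: free_two_graded_monoids graded_monoid_bconc indecomposable_bconc_inj
    graded_monoid_bdown down_indecomposable_bdown_inj first_split_bconc_bdown A_two_assoc.
Qed.
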